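(* Let $k$ be a field of characteristic $0$, $n\ge 2$, and let $v$ be a discrete valuation of $K_n=k((X_1,\ldots,X_n))$ over $k$ (in the sense of the context) with value group $\mathbb{Z}$. Put $\alpha_i=v(X_i)$ for $i=1,\ldots,n$. Then, by means of a finite number of monoidal transformations (composed with permutations of the variables), one obtains $n$ elements $Y_1,\ldots,Y_n\in\widehat{K}_n$ (the new variables) such that $\hat v(Y_i)=\alpha=\gcd\{\alpha_1,\ldots,\alpha_n\}$ for all $i=1,\ldots,n$.
   Context: $R_n=k[[X_1,\ldots,X_n]]$ with maximal ideal $M_n=(X_1,\ldots,X_n)$ and quotient field $K_n$. A discrete valuation of $K_n\mid k$ means a rank-one discrete valuation $v$ of $K_n$, trivial on $k$, whose center $\mathfrak m_v\cap R_n$ in $R_n$ is $M_n$ (so $v>0$ on $M_n\setminus\{0\}$, $v\ge 0$ on $R_n$). $\widehat K_n$ denotes the completion of $K_n$ with respect to $v$ and $\hat v$ the extension of $v$ to it. A monoidal transformation is the injective homomorphism $k[[X_1,\ldots,X_n]]\to k[[Y_1,\ldots,Y_n]]$, $X_1\mapsto Y_1$, $X_2\mapsto Y_1Y_2$, $X_i\mapsto Y_i$ ($i\ge 3$), applied when $v(X_2)>v(X_1)$ (up to renumbering of variables); the new variables are identified with the elements $Y_1=X_1$, $Y_2=X_2/X_1$, $Y_i=X_i$ of $\widehat K_n$, and the procedure may be iterated. *)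

From mathcomp Require Import all_boot all_order all_algebra.
From mathcomp Require Import perm.
Set Implicit Arguments. Unset Strict Implicit. Unset Printing Implicit Defensive.
Import Order.TTheory GRing.Theory Num.Theory.
Local Open Scope ring_scope.

Section PowerSeries.
Variables (k : fieldType) (n : nat).

Definition mindex := {ffun 'I_n -> nat}.

(* R_n = k[[X_1,...,X_n]] : a formal power series is its coefficient function *)
Definition ps := mindex -> k.

Definition ps_zero : ps := fun _ => 0.
Definition ps_add (f g : ps) : ps := fun m => f m + g m.
(* Cauchy product: (fg)_m = sum_{a <= m} f_a g_{m-a} *)
Definition ps_mul (f g : ps) : ps := fun m =>
  \sum_(a : {ffun 'I_n -> 'I_((\sum_(i < n) m i).+1)} | [forall i, (a i <= m i)%N])
     f [ffun i => nat_of_ord (a i)] * g [ffun i => (m i - a i)%N].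
Definition ps_const (c : k) : ps := fun m => if m == [ffun => 0%N] then c else 0.
Definition ps_X (i : 'I_n) : ps := fun m => if m == [ffun l => nat_of_bool (l == i)] then 1 else 0.

(* A discrete (rank one, Z-valued) valuation of K_n = Frac(R_n) over k whose
   center on R_n is M_n, given through its (uniquely determining) restriction
   to R_n \ {0}; v(f/g) = v f - v g. *)
Definition center_val (v : ps -> int) : Prop :=
  [/\ (forall f g, f <> ps_zero -> g <> ps_zero -> v (ps_mul f g) = v f + v g),
      (forall f g, f <> ps_zero -> g <> ps_zero -> ps_add f g <> ps_zero ->
          Num.min (v f) (v g) <= v (ps_add f g)),
      (forall c, c != 0 -> v (ps_const c) = 0),
      (forall f, f <> ps_zero -> 0 <= v f) &
      (forall f, f <> ps_zero -> f [ffun => 0%N] = 0 -> 0 < v f)].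

Definition value_group_Z (v : ps -> int) : Prop :=
  forall z : int, exists f g, [/\ f <> ps_zero, g <> ps_zero & z = v f - v g].

(* elements of K_n (inside \hat K_n) represented as fractions num/den *)
Definition frac := (ps * ps)%type.
Definition vhat (v : ps -> int) (y : frac) : int := v y.1 - v y.2.

Definition vars := 'I_n -> frac.

Definition init_vars : vars := fun i => (ps_X i, ps_const 1).

(* monoidal transformation with centre (Y_i, Y_j): Y_j := Y_j / Y_i *)
Definition monoidal (i j : 'I_n) (Y : vars) : vars := fun l =>
  if l == j then (ps_mul (Y j).1 (Y i).2, ps_mul (Y j).2 (Y i).1) else Y l.

Inductive mstep (v : ps -> int) : vars -> vars -> Prop :=
| mstep_perm (s : 'S_n) (Y : vars) : mstep v Y (fun l => Y (s l))
| mstep_monoidal (i j : 'I_n) (Y : vars) :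
    i != j -> vhat v (Y i) < vhat v (Y j) -> mstep v Y (monoidal i j Y).

Inductive reach (v : ps -> int) : vars -> vars -> Prop :=
| reach_refl Y : reach v Y Y
| reach_step Y Z W : mstep v Y Z -> reach v Z W -> reach v Y W.

End PowerSeries.

From mathcomp Require Import all_boot all_order all_algebra.
From mathcomp Require Import perm.
From Stdlib Require Import FunctionalExtensionality.
From mathcomp Require Import zify.
Set Implicit Arguments. Unset Strict Implicit. Unset Printing Implicit Defensive.
Import Order.TTheory GRing.Theory Num.Theory.
Local Open Scope ring_scope.

(* Starting from the variables X_i, every system reached by monoidal
   transformations consists of Laurent monomials, so v is additive on it and
   the monoidal transformation centred at (Y_i, Y_j) replaces v(Y_j) by
   v(Y_j) - v(Y_i).  This is one step of the subtractive Euclidean algorithm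
   on the positive integers v(Y_1), ..., v(Y_n): it keeps their gcd and lowers
   their sum, so after finitely many steps all of them are equal, hence equal
   to gcd(alpha_1, ..., alpha_n).  Neither the characteristic of k, nor
   n >= 2, nor the value group of v plays a role in this argument. *)

Lemma dvdz_anti_ge0 m n : 0 <= m -> 0 <= n -> (m %| n)%Z -> (n %| m)%Z -> m = n.
Proof.
move=> m_ge0 n_ge0 mn nm; rewrite -(gez0_abs m_ge0) -(gez0_abs n_ge0).
by apply/eqP; rewrite eqz_nat eqn_dvd -!dvdzE mn nm.
Qed.

Section IntFamilies.
Variable I : finType.
Implicit Types F G : I -> int.

Lemma biggcdz_ge0 F : 0 <= \big[gcdz/0]_i F i.
Proof. by apply: (big_rec (fun x => 0 <= x)). Qed.

Lemma dvdz_biggcd F d : (d %| \big[gcdz/0]_i F i)%Z = [forall i, d %| F i]%Z.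
Proof. by rewrite (big_morph (fun x => d %| x)%Z (dvdz_gcd d) (dvdz0 d)) big_andE. Qed.

Lemma eq_biggcdz F G : (forall d, [forall i, d %| F i] = [forall i, d %| G i])%Z ->
  \big[gcdz/0]_i F i = \big[gcdz/0]_i G i.
Proof.
move=> FG; apply: dvdz_anti_ge0; rewrite ?biggcdz_ge0 // dvdz_biggcd.
  by rewrite -FG -dvdz_biggcd.
by rewrite FG -dvdz_biggcd.
Qed.

Lemma biggcdz_const F i : 0 <= F i -> (forall j, F j = F i) ->
  \big[gcdz/0]_j F j = F i.
Proof.
move=> Fi_ge0 F_const; apply: dvdz_anti_ge0; rewrite ?biggcdz_ge0 //.
  by move: (dvdzz (\big[gcdz/0]_j F j)); rewrite dvdz_biggcd => /forallP.
by rewrite dvdz_biggcd; apply/forallP => j; rewrite F_const.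
Qed.

Lemma biggcdz_subr F i j : i != j ->
  \big[gcdz/0]_l (if l == j then F j - F i else F l) = \big[gcdz/0]_l F l.
Proof.
move=> neq_ij; apply: eq_biggcdz => d.
apply/forallP/forallP => dF l; have := dF l; case: eqP => [->|//].
  by have := dF i; rewrite (negbTE neq_ij) => dFi dFj; rewrite -(subrK (F i) (F j)) rpredD.
by move=> _; rewrite rpredB ?dF.
Qed.

Lemma const_or_lt F : (forall i j, F i = F j) \/ exists i j, F i < F j.
Proof.
case: (boolP [forall i, forall j, F i == F j]) => [/forallP F_const|].
  by left => i j; apply/eqP; move/forallP: (F_const i).
case/forallPn => i /forallPn [j]; rewrite neq_lt => /orP[].
  by right; exists i, j.
by right; exists j, i.
Qed.

End IntFamilies.

Lemma sumr_subr (R : zmodType) (I : finType) (F : I -> R) i j :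
  \sum_l (if l == j then F j - F i else F l) = \sum_l F l - F i.
Proof.
rewrite [LHS](bigD1 j) // [in RHS](bigD1 j) //= eqxx addrAC; congr (_ + _ - _).
by apply: eq_bigr => l /negbTE ->.
Qed.

Section Monomials.
Variables (k : fieldType) (n : nat).
Implicit Types a b m : mindex n.

Definition ps_mono a : ps k n := fun m => if m == a then 1 else 0.

Definition mindex_add a b : mindex n := [ffun i => (a i + b i)%N].

Lemma ps_mono_neq0 a : ps_mono a <> @ps_zero k n.
Proof. by move/(congr1 (fun f => f a)); rewrite /ps_mono /ps_zero eqxx; apply/eqP/oner_neq0. Qed.

Lemma ps_mul_mono a b : ps_mul (ps_mono a) (ps_mono b) = ps_mono (mindex_add a b).
Proof.
apply: functional_extensionality => m; rewrite /ps_mul /ps_mono.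
have [m_ab|m_neq] := eqVneq m (mindex_add a b); last first.
  rewrite big1 // => c /forallP c_le_m.
  case: eqP => [c_a|_]; last by rewrite mul0r.
  case: eqP => [mc_b|_]; last by rewrite mulr0.
  case/eqP: m_neq; apply/ffunP => i; move/ffunP/(_ i): c_a; move/ffunP/(_ i): mc_b.
  by rewrite !ffunE => <- <-; rewrite subnKC.
have a_lt i : (a i < (\sum_(l < n) m l).+1)%N.
  rewrite ltnS (@leq_trans (m i)) //; first by rewrite m_ab ffunE leq_addr.
  by rewrite (bigD1 i) //= leq_addr.
(* the only nonzero term of the Cauchy product at m = a + b is indexed by a *)
pose c : {ffun 'I_n -> 'I_((\sum_(l < n) m l).+1)} := [ffun i => Ordinal (a_lt i)].
have c_a : [ffun i => nat_of_ord (c i)] = a by apply/ffunP => i; rewrite !ffunE.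
have mc_b : [ffun i => (m i - c i)%N] = b.
  by apply/ffunP => i; rewrite !ffunE /= m_ab ffunE addKn.
have c_le_m : [forall i, c i <= m i]%N.
  by apply/forallP => i; rewrite ffunE /= m_ab ffunE leq_addr.
rewrite (bigD1 c) //= c_a mc_b !eqxx mulr1 big1 ?addr0 // => c' /andP [_ c'_neq].
case: eqP => [c'_a|_]; last by rewrite mul0r.
case/eqP: c'_neq; apply/ffunP => i; apply: val_inj.
by move/ffunP/(_ i): c'_a; rewrite !ffunE /= => ->.
Qed.

Definition monomial_vars (Y : vars k n) :=
  forall i, exists a b, Y i = (ps_mono a, ps_mono b).

Lemma monomial_vars_init : monomial_vars (@init_vars k n).
Proof. by move=> i; exists [ffun l => nat_of_bool (l == i)], [ffun => 0%N]. Qed.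

Lemma monomial_vars_monoidal i j Y : monomial_vars Y -> monomial_vars (monoidal i j Y).
Proof.
move=> monY l; rewrite /monoidal; case: eqP => _; last exact: monY.
have [aj [bj ->]] := monY j; have [ai [bi ->]] := monY i.
by rewrite /= !ps_mul_mono; do 2 eexists.
Qed.

End Monomials.

Section Valuation.
Variables (k : fieldType) (n : nat) (v : ps k n -> int).
Hypothesis v_center : center_val v.

Lemma vhat_init i : vhat v (@init_vars k n i) = v (@ps_X k n i).
Proof.
have [_ _ v_const _ _] := v_center.
by rewrite /vhat /= v_const ?oner_neq0 // subr0.
Qed.

Lemma vhat_init_gt0 i : 0 < vhat v (@init_vars k n i).
Proof.
have [_ _ _ _ v_gt0] := v_center; rewrite vhat_init v_gt0 //.
  exact: (ps_mono_neq0 (a := [ffun l => nat_of_bool (l == i)])).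
rewrite /ps_X; case: eqP => // /ffunP /(_ i).
by rewrite !ffunE eqxx.
Qed.

Lemma vhat_monoidal i j (Y : vars k n) l : monomial_vars Y ->
  vhat v (monoidal i j Y l) = if l == j then vhat v (Y j) - vhat v (Y i) else vhat v (Y l).
Proof.
move=> monY; rewrite /monoidal; case: eqP => [_|//].
have [aj [bj ->]] := monY j; have [ai [bi ->]] := monY i.
have [v_mul _ _ _ _] := v_center.
rewrite /vhat /= !v_mul; try exact: ps_mono_neq0.
by lia.
Qed.

Lemma reach_gcd_vhat (Y : vars k n) : monomial_vars Y -> (forall i, 0 < vhat v (Y i)) ->
  exists2 Z, reach v Y Z & forall i, vhat v (Z i) = \big[gcdz/0]_l vhat v (Y l).
Proof.
move=> monY posY.
have [N] : exists N : nat, \sum_l vhat v (Y l) < N%:Z.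
  by exists `|\sum_l vhat v (Y l)|.+1; rewrite (le_lt_trans (ler_norm _)) // -abszE ltz_nat.
elim: N Y monY posY => [|N IH] Y monY posY ltYN.
  by move: ltYN; rewrite ltNge sumr_ge0 // => i _; apply: ltW.
have [Y_const|[i [j ltYij]]] := const_or_lt (fun l => vhat v (Y l)).
  by exists Y => [|i]; [apply: reach_refl | rewrite (biggcdz_const (ltW (posY i)))].
have neq_ij : i != j by apply: contraTneq ltYij => ->; rewrite ltxx.
have vY' l := vhat_monoidal i j l monY.
have posY' l : 0 < vhat v (monoidal i j Y l).
  by rewrite vY'; case: ifP => _; [rewrite subr_gt0 | apply: posY].
have ltY'N : \sum_l vhat v (monoidal i j Y l) < N%:Z.
  rewrite (eq_bigr _ (fun l _ => vY' l)) sumr_subr ltrBlDr (lt_le_trans ltYN) //.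
  by rewrite -addn1 PoszD lerD2l -gtz0_ge1.
have [Z reachZ vZ] := IH _ (monomial_vars_monoidal i j monY) posY' ltY'N.
exists Z => [|l]; first exact: reach_step (mstep_monoidal neq_ij ltYij) reachZ.
by rewrite vZ (eq_bigr _ (fun l _ => vY' l)) biggcdz_subr.
Qed.

End Valuation.

Theorem lemma2 (k : fieldType) (n : nat) (v : ps k n -> int) :
  [pchar k] =i pred0 ->
  (2 <= n)%N ->
  center_val v ->
  value_group_Z v ->
  exists Y : vars k n,
    reach v (@init_vars k n) Y /\
    forall i : 'I_n, vhat v (Y i) = \big[gcdz/0]_(j < n) v (@ps_X k n j).
Proof.
move=> _ _ v_center _.
have [Z reachZ vZ] :=
  reach_gcd_vhat v_center (@monomial_vars_init k n) (vhat_init_gt0 v_center).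
exists Z; split=> // i; rewrite vZ.
by apply: eq_bigr => j _; apply: vhat_init.
Qed.
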